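(* In the setting described in the context, let $\{x_k\}_{k\geq 0}$ be the random iterates generated by UCDC$(x_0)$. Then for every $k$, $$\mathbf{E}[F(x_{k+1})-F^*\mid x_k]\leq \frac{1}{n}\big(H(x_k,T(x_k))-F^*\big)+\frac{n-1}{n}\big(F(x_k)-F^*\big).$$
   Context: Let $U\in\mathbf{R}^{N\times N}$ be a column permutation of the $N\times N$ identity matrix, partitioned as $U=[U_1,\dots,U_n]$ with $U_i\in\mathbf{R}^{N\times N_i}$, $\sum_i N_i=N$. For $x\in\mathbf{R}^N$ write $x^{(i)}=U_i^Tx\in\mathbf{R}^{N_i}$, so $x=\sum_i U_ix^{(i)}$. Each $\mathbf{R}^{N_i}$ carries the norm $\|t\|_{(i)}=\langle B_it,t\rangle^{1/2}$ and dual norm $\|t\|_{(i)}^*=\langle B_i^{-1}t,t\rangle^{1/2}$, where $B_i$ is positive definite. Consider minimizing $F(x)=f(x)+\Psi(x)$ over $\mathbf{R}^N$, where $f$ is convex and differentiable with block-coordinate Lipschitz gradient: there are constants $L_1,\dots,L_n>0$ with $\|\nabla_if(x+U_it)-\nabla_if(x)\|_{(i)}^*\leq L_i\|t\|_{(i)}$ for all $x\in\mathbf{R}^N$, $t\in\mathbf{R}^{N_i}$, $i$, where $\nabla_if(x)=U_i^T\nabla f(x)$; and $\Psi(x)=\sum_{i=1}^n\Psi_i(x^{(i)})$ with each $\Psi_i$ a proper closed convex extended-real-valued function. The problem is assumed to have a minimizer; $F^*$ is the optimal value. Let $L=\mathrm{Diag}(L_1,\dots,L_n)$ and $\|x\|_L=(\sum_i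 L_i\|x^{(i)}\|_{(i)}^2)^{1/2}$. Define $V_i(x,t)=\langle\nabla_if(x),t\rangle+\frac{L_i}{2}\|t\|_{(i)}^2+\Psi_i(x^{(i)}+t)$, $T^{(i)}(x)=\arg\min_{t\in\mathbf{R}^{N_i}}V_i(x,t)$, $T(x)=\sum_iU_iT^{(i)}(x)\in\mathbf{R}^N$, and $H(x,T)=f(x)+\langle\nabla f(x),T\rangle+\frac12\|T\|_L^2+\Psi(x+T)$. Algorithm UCDC$(x_0)$: for $k=0,1,2,\dots$, choose $i_k=i\in\{1,\dots,n\}$ uniformly at random (probability $1/n$ each, independently of the past) and set $x_{k+1}=x_k+U_iT^{(i)}(x_k)$. *)

From HB Require Import structures.
From mathcomp Require Import all_boot all_order all_algebra.
From mathcomp Require Import all_classical all_reals.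
From mathcomp Require Import ereal topology normedtype derive.
Unset Printing Implicit Defensive.
Import Order.TTheory GRing.Theory Num.Theory.
Import numFieldNormedType.Exports.
Local Open Scope classical_set_scope.
Local Open Scope ring_scope.

Definition vdot {R : realType} {m : nat} (a b : 'cV[R]_m) : R := (a^T *m b) 0 0.

Definition posdef {R : realType} {m : nat} (B : 'M[R]_m) : Prop :=
  B^T = B /\ forall t : 'cV[R]_m, t != 0 -> 0 < vdot (B *m t) t.

Definition bnorm {R : realType} {m : nat} (B : 'M[R]_m) (t : 'cV[R]_m) : R :=
  Num.sqrt (vdot (B *m t) t).
Definition bdnorm {R : realType} {m : nat} (B : 'M[R]_m) (t : 'cV[R]_m) : R :=
  Num.sqrt (vdot (invmx B *m t) t).

Definition grad {R : realType} {N : nat} (f : 'cV[R]_N -> R) (x : 'cV[R]_N)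
  : 'cV[R]_N := \col_j ('D_(delta_mx j 0) f x).

Definition convex_fun {R : realType} {N : nat} (f : 'cV[R]_N -> R) : Prop :=
  forall (x y : 'cV[R]_N) (a : R), 0 <= a <= 1 ->
    f (a *: x + (1 - a) *: y) <= a * f x + (1 - a) * f y.

Definition proper_efun {R : realType} {m : nat} (g : 'cV[R]_m -> \bar R) : Prop :=
  (forall t, g t != -oo%E) /\ (exists t, g t != +oo%E).

Definition closed_efun {R : realType} {m : nat} (g : 'cV[R]_m -> \bar R) : Prop :=
  forall (t : 'cV[R]_m) (a : R), (a%:E < g t)%E ->
    \forall s \near t, (a%:E < g s)%E.

Definition convex_efun {R : realType} {m : nat} (g : 'cV[R]_m -> \bar R) : Prop :=
  forall (x y : 'cV[R]_m) (a : R), 0 <= a <= 1 ->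
    (g (a *: x + (1 - a) *: y)%R <= a%:E * g x + (1 - a)%:E * g y)%E.

Section UCDC.
Context {R : realType} {n : nat} {Ni : 'I_n -> nat}.
Local Notation N := (\sum_(i < n) Ni i)%N.
Variables (U : 'M[R]_N) (B : forall i, 'M[R]_(Ni i)) (f : 'cV[R]_N -> R)
  (L : 'I_n -> R) (Psi : forall i, 'cV[R]_(Ni i) -> \bar R).

Definition Ublk (i : 'I_n) : 'M[R]_(N, Ni i) := submxrow U i.
Definition xblk (x : 'cV[R]_N) (i : 'I_n) : 'cV[R]_(Ni i) := (Ublk i)^T *m x.
Definition gradblk (x : 'cV[R]_N) (i : 'I_n) : 'cV[R]_(Ni i) :=
  (Ublk i)^T *m grad f x.

Definition Psi_full (x : 'cV[R]_N) : \bar R := (\sum_(i < n) Psi i (xblk x i))%E.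
Definition F (x : 'cV[R]_N) : \bar R := ((f x)%:E + Psi_full x)%E.
Definition Fstar : \bar R := ereal_inf (range F).

Definition Lnorm2 (x : 'cV[R]_N) : R :=
  \sum_(i < n) L i * bnorm (B i) (xblk x i) ^+ 2.

Definition V (i : 'I_n) (x : 'cV[R]_N) (t : 'cV[R]_(Ni i)) : \bar R :=
  ((vdot (gradblk x i) t + L i / 2 * bnorm (B i) t ^+ 2)%:E
   + Psi i (xblk x i + t))%E.

(* T^(i)(x) = argmin_t V_i(x, t)  (chosen by classical choice) *)
Definition Tblk (x : 'cV[R]_N) (i : 'I_n) : 'cV[R]_(Ni i) :=
  xget 0 [set t | forall s, (V i x t <= V i x s)%E].

Definition Tfull (x : 'cV[R]_N) : 'cV[R]_N := \sum_(i < n) Ublk i *m Tblk x i.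

Definition H (x T : 'cV[R]_N) : \bar R :=
  ((f x + vdot (grad f x) T + 1 / 2 * Lnorm2 T)%:E + Psi_full (x + T))%E.

Definition step (x : 'cV[R]_N) (i : 'I_n) : 'cV[R]_N := x + Ublk i *m Tblk x i.

Definition iterate (x0 : 'cV[R]_N) (s : seq 'I_n) : 'cV[R]_N := foldl step x0 s.

(* Sample space for (i_0,...,i_k): (k+1)-tuples of block indices with the
   uniform distribution (= i.i.d. uniform choices).
   x_k(w) = iterate over the first k indices, x_{k+1}(w) over all k+1. *)
Definition x_at (x0 : 'cV[R]_N) (k : nat) (j : nat) (w : k.+1.-tuple 'I_n)
  : 'cV[R]_N := iterate x0 (take j w).

(* elementary conditional expectation, given the discrete random variable X,
   of the (extended-real) random variable Y under the uniform distribution on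
   the finite sample space, evaluated at the outcome w *)
Definition condE {Ω : finType} {T : eqType} (Y : Ω -> \bar R) (X : Ω -> T)
  (w : Ω) : \bar R :=
  ((\sum_(w' : Ω | X w' == X w) Y w') *
     ((#|[pred w' | X w' == X w]|%:R)^-1 : R)%:E)%E.

End UCDC.

(* The block Lipschitz bound on
   the gradient, integrated along the segment by the mean value theorem, and
   the separability of Psi give
     F(x + U_i t) <= f(x) + V_i(x, t) + sum_{j <> i} Psi_j(x^(j))
   for every t, in particular for t = T^(i)(x).  Averaging over i and using
   H(x, T(x)) = f(x) + sum_i V_i(x, T^(i)(x)) yields the bound, and the
   conditional expectation given x_k is exactly this average because i_k is
   uniform and independent of i_0, ..., i_(k-1). *)

From HB Require Import structures.
From mathcomp Require Import all_boot all_order all_algebra.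
From mathcomp Require Import all_classical all_reals.
From mathcomp Require Import ereal topology normedtype derive.
From mathcomp Require Import fingroup perm ring lra.
Import Order.TTheory GRing.Theory Num.Theory.
Import numFieldNormedType.Exports.
Set Implicit Arguments.
Unset Strict Implicit.
Local Open Scope ring_scope.

Lemma perm_mx_trmx_mul (R : ringType) m (P : 'M[R]_m) :
  is_perm_mx P -> P^T *m P = 1%:M.
Proof. by case/existsP=> s /eqP ->; rewrite tr_perm_mx -perm_mxM mulVg perm_mx1. Qed.

Section OrthogonalBlocks.
Variables (R : realType) (n : nat) (Ni : 'I_n -> nat).
Local Notation N := (\sum_(i < n) Ni i)%N.
Variable U : 'M[R]_N.
Hypothesis UtU : U^T *m U = 1%:M.

Lemma Ublk_trmx_mulE i j a b :
  ((Ublk U j)^T *m Ublk U i) a b = (tagnat.Rank j a == tagnat.Rank i b)%:R.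
Proof.
have := congr1 (fun M : 'M[R]_N => M (tagnat.Rank j a) (tagnat.Rank i b)) UtU.
by rewrite !mxE => <-; apply: eq_bigr => r _; rewrite !mxE.
Qed.

Lemma Ublk_trmxK i (t : 'cV[R]_(Ni i)) : (Ublk U i)^T *m (Ublk U i *m t) = t.
Proof.
rewrite mulmxA; apply/matrixP => a b.
rewrite mxE (bigD1 a) //= Ublk_trmx_mulE eqxx mul1r big1 ?addr0 // => c ca.
rewrite Ublk_trmx_mulE -val_eqE /= tagnat.eq_Rank eqxx /= val_eqE eq_sym.
by rewrite (negbTE ca) mul0r.
Qed.

Lemma Ublk_trmx_mul_neq i j (t : 'cV[R]_(Ni i)) :
  i != j -> (Ublk U j)^T *m (Ublk U i *m t) = 0.
Proof.
move=> ij; rewrite mulmxA; apply/matrixP => a b; rewrite !mxE.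
apply: big1 => c _.
by rewrite Ublk_trmx_mulE -val_eqE /= tagnat.eq_Rank eq_sym (negbTE ij) mul0r.
Qed.

Lemma xblk_sum_Ublk (t : forall i, 'cV[R]_(Ni i)) j :
  xblk U (\sum_i Ublk U i *m t i) j = t j.
Proof.
rewrite /xblk mulmx_sumr (bigD1 j) //= Ublk_trmxK big1 ?addr0 // => i ij.
exact: Ublk_trmx_mul_neq.
Qed.

Lemma xblk_add_Ublk x i (t : 'cV[R]_(Ni i)) :
  xblk U (x + Ublk U i *m t) i = xblk U x i + t.
Proof. by rewrite /xblk mulmxDr Ublk_trmxK. Qed.

Lemma xblk_add_Ublk_neq x i j (t : 'cV[R]_(Ni i)) :
  i != j -> xblk U (x + Ublk U i *m t) j = xblk U x j.
Proof. by move=> ij; rewrite /xblk mulmxDr Ublk_trmx_mul_neq // addr0. Qed.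

End OrthogonalBlocks.

Section InnerProduct.
Variables (R : realType) (m : nat).
Implicit Types (a b c : 'cV[R]_m).

Lemma vdotE a b : vdot a b = \sum_k a k 0 * b k 0.
Proof. by rewrite /vdot mxE; apply: eq_bigr => k _; rewrite mxE. Qed.

Lemma vdotC a b : vdot a b = vdot b a.
Proof. by rewrite !vdotE; apply: eq_bigr => k _; rewrite mulrC. Qed.

Lemma vdot0r a : vdot a 0 = 0.
Proof. by rewrite vdotE big1 // => k _; rewrite mxE mulr0. Qed.

Lemma vdotBl a b c : vdot (a - b) c = vdot a c - vdot b c.
Proof.
by rewrite !vdotE -sumrB; apply: eq_bigr => k _; rewrite !mxE mulrBl.
Qed.

Lemma vdotBr a b c : vdot c (a - b) = vdot c a - vdot c b.
Proof. by rewrite !(vdotC c) vdotBl. Qed.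

Lemma vdotZl s a c : vdot (s *: a) c = s * vdot a c.
Proof. by rewrite !vdotE mulr_sumr; apply: eq_bigr => k _; rewrite mxE mulrA. Qed.

Lemma vdotZr s a c : vdot c (s *: a) = s * vdot c a.
Proof. by rewrite !(vdotC c) vdotZl. Qed.

Lemma vdot_sumr (I : finType) c (F : I -> 'cV[R]_m) :
  vdot c (\sum_i F i) = \sum_i vdot c (F i).
Proof.
rewrite vdotE; under eq_bigr do rewrite summxE mulr_sumr.
by rewrite exchange_big; apply: eq_bigr => i _; rewrite vdotE.
Qed.

Lemma vdot_mulmxr p (M : 'M[R]_(m, p)) a (b : 'cV[R]_p) :
  vdot a (M *m b) = vdot (M^T *m a) b.
Proof. by rewrite /vdot mulmxA trmx_mul trmxK. Qed.

Lemma bnormZ (B : 'M[R]_m) s a : bnorm B (s *: a) = `|s| * bnorm B a.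
Proof.
rewrite /bnorm -scalemxAr vdotZl vdotZr mulrA -expr2 sqrtrM ?sqr_ge0 //.
by rewrite sqrtr_sqr.
Qed.

Variable B : 'M[R]_m.
Hypothesis Bpd : posdef B.

Lemma posdef_vdot_ge0 a : 0 <= vdot (B *m a) a.
Proof.
case: Bpd => _ Bpos; have [->|a0] := eqVneq a 0; first by rewrite vdot0r.
exact/ltW/Bpos.
Qed.

Lemma posdef_vdot_eq0 a : vdot (B *m a) a = 0 -> a = 0.
Proof.
case: Bpd => _ Bpos a0; apply/eqP; apply: contra_eqT a0 => /Bpos.
by rewrite lt0r => /andP[].
Qed.

Lemma posdef_vdotC a b : vdot (B *m a) b = vdot (B *m b) a.
Proof. by case: Bpd => BT _; rewrite vdotC vdot_mulmxr BT. Qed.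

Lemma posdef_unitmx : B \in unitmx.
Proof.
rewrite -row_free_unit; apply: inj_row_free => v vB0.
have [BT _] := Bpd.
suff /(congr1 trmx) : v^T = 0 by rewrite trmxK trmx0.
apply: posdef_vdot_eq0.
by rewrite -BT -trmx_mul vB0 trmx0 vdotC vdot0r.
Qed.

(* Nonnegativity of the quadratic form at [sqrt<Bb,b> a - sqrt<Ba,a> b]. *)
Lemma posdef_cauchy_schwarz a b :
  vdot (B *m a) b <= Num.sqrt (vdot (B *m a) a) * Num.sqrt (vdot (B *m b) b).
Proof.
set qa := vdot (B *m a) a; set qb := vdot (B *m b) b; set ab := vdot (B *m a) b.
set sa := Num.sqrt qa; set sb := Num.sqrt qb.
have sa0 : 0 <= sa by exact: sqrtr_ge0.
have sb0 : 0 <= sb by exact: sqrtr_ge0.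
have sa2 : sa ^+ 2 = qa by rewrite sqr_sqrtr // posdef_vdot_ge0.
have sb2 : sb ^+ 2 = qb by rewrite sqr_sqrtr // posdef_vdot_ge0.
have [sa_eq0|sa_neq0] := eqVneq sa 0.
  have /posdef_vdot_eq0 a0 : qa = 0 by rewrite -sa2 sa_eq0 expr0n.
  by rewrite /ab a0 mulmx0 vdotC vdot0r mulr_ge0.
have [sb_eq0|sb_neq0] := eqVneq sb 0.
  have /posdef_vdot_eq0 b0 : qb = 0 by rewrite -sb2 sb_eq0 expr0n.
  by rewrite /ab b0 vdot0r mulr_ge0.
have sab0 : 0 < sa * sb by rewrite mulr_gt0 // lt0r ?sa_neq0 ?sb_neq0.
have := posdef_vdot_ge0 (sb *: a - sa *: b).
rewrite mulmxBr -!scalemxAr vdotBl !vdotBr !vdotZl !vdotZr.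
rewrite (posdef_vdotC b a) -/qa -/qb -/ab; nra.
Qed.

Lemma vdot_le_bdnorm_bnorm g t : vdot g t <= bdnorm B g * bnorm B t.
Proof.
rewrite /bdnorm /bnorm; set u := invmx B *m g.
have -> : g = B *m u by rewrite /u mulKVmx ?posdef_unitmx.
by rewrite (vdotC u) posdef_cauchy_schwarz.
Qed.

End InnerProduct.

Lemma is_derive_quadratic_bound (R : realType) (phi dphi : R -> R) (c K : R) :
  (forall r : R, is_derive r 1 phi (dphi r)) ->
  (forall r, r \in `]0, 1[ -> dphi r <= c + K * (2 * r)) ->
  phi 1 <= phi 0 + c + K.
Proof.
move=> phi_derive dphi_le.
pose psi := phi - c \*: (@idfun R) - K \*: (@idfun R) ^+ 2.
have psi_derive (r : R) : is_derive r 1 psi (dphi r - c - K * (2 * r)).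
  apply: is_derive_eq; rewrite /= expr1.
  by congr (_ - _ - _); rewrite /GRing.scale /= ?mulr1.
have psi_cont : {within `[0, 1], continuous psi}%classic.
  by apply: derivable_within_continuous => r _; exact: ex_derive.
have [s s01 psiE] := MVT ltr01 (fun r _ => psi_derive r) psi_cont.
move: (dphi_le s s01) psiE; rewrite /psi !fctE /GRing.scale /=.
rewrite expr1n expr0n !scaler0 !subr0 mulr1 -[c%:A]/(c * 1) -[K%:A]/(K * 1) !mulr1; lra.
Qed.

Section LineRestriction.
Variables (R : realType) (m : nat) (f : 'cV[R]_m -> R).

Lemma vdot_grad x d : differentiable f x -> vdot (grad f x) d = 'D_d f x.
Proof.
move=> fx; rewrite deriveE // {2}(matrix_sum_delta d) linear_sum vdotE.
apply: eq_bigr => j _; rewrite big_ord1 linearZ /= -deriveE // /grad mxE mulrC.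
by rewrite [in RHS](ord1 (0 : 'I_1)).
Qed.

Lemma is_derive_line x d s : differentiable f (x + s *: d) ->
  is_derive s 1 (fun r : R => f (x + r *: d)) ('D_d f (x + s *: d)).
Proof.
move=> fxs.
have quotE : (fun h : R => h^-1 *: (((fun r => f (x + r *: d)) \o shift s) (h *: 1)
                        - f (x + s *: d)))
       = (fun h : R => h^-1 *: ((f \o shift (x + s *: d)) (h *: d) - f (x + s *: d))).
  by apply: funext => h /=; rewrite scaler1 scalerDl addrCA.
split; last by rewrite /derive quotE.
by rewrite /derivable quotE; exact: diff_derivable.
Qed.

End LineRestriction.

Section BlockModel.
Variables (R : realType) (n : nat) (Ni : 'I_n -> nat).
Local Notation N := (\sum_(i < n) Ni i)%N.
Variables (U : 'M[R]_N) (B : forall i, 'M[R]_(Ni i)) (f : 'cV[R]_N -> R)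
  (L : 'I_n -> R) (Psi : forall i, 'cV[R]_(Ni i) -> \bar R).
Arguments Psi : clear implicits.
Hypothesis UtU : U^T *m U = 1%:M.
Hypothesis Bpd : forall i, posdef (B i).
Hypothesis fdiff : forall x, differentiable f x.
Hypothesis fLip : forall x i (t : 'cV[R]_(Ni i)),
  bdnorm (B i) (gradblk U f (x + Ublk U i *m t) i - gradblk U f x i)
    <= L i * bnorm (B i) t.

Lemma f_add_Ublk_le x i (t : 'cV[R]_(Ni i)) :
  f (x + Ublk U i *m t)
    <= f x + vdot (gradblk U f x i) t + L i / 2 * bnorm (B i) t ^+ 2.
Proof.
set d := Ublk U i *m t.
have := is_derive_quadratic_bound (phi := fun r => f (x + r *: d))
  (dphi := fun r => 'D_d f (x + r *: d)) (c := vdot (gradblk U f x i) t)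
  (K := L i / 2 * bnorm (B i) t ^+ 2).
rewrite /= scale1r scale0r addr0; apply=> [r|r r01]; first exact: is_derive_line.
have r0 : 0 <= r by move: r01; rewrite in_itv /= => /andP[/ltW].
rewrite -vdot_grad // vdot_mulmxr -/(gradblk U f _ i) /d scalemxAr.
have := vdot_le_bdnorm_bnorm (Bpd i)
  (gradblk U f (x + Ublk U i *m (r *: t)) i - gradblk U f x i) t.
have := fLip x (r *: t); rewrite bnormZ ger0_norm // vdotBl.
have := sqrtr_ge0 (vdot (B i *m t) t); rewrite -/(bnorm (B i) t).
have := sqrtr_ge0 (vdot (invmx (B i) *m
  (gradblk U f (x + Ublk U i *m (r *: t)) i - gradblk U f x i))
  (gradblk U f (x + Ublk U i *m (r *: t)) i - gradblk U f x i)).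
rewrite -/(bdnorm _ _); nra.
Qed.

Lemma Psi_full_add_Ublk x i (t : 'cV[R]_(Ni i)) :
  Psi_full U Psi (x + Ublk U i *m t)
    = (Psi i (xblk U x i + t)%R + \sum_(j | j != i) Psi j (xblk U x j))%E.
Proof.
rewrite /Psi_full (bigD1 i) //= xblk_add_Ublk //; congr (_ + _).
by apply: eq_bigr => j ji; rewrite xblk_add_Ublk_neq // eq_sym.
Qed.

Lemma F_add_Ublk_le x i (t : 'cV[R]_(Ni i)) :
  (F U f Psi (x + Ublk U i *m t)%R
    <= (f x)%:E + V U B f L Psi i x t + \sum_(j | j != i) Psi j (xblk U x j))%E.
Proof.
rewrite /F Psi_full_add_Ublk /V !addeA leeD2r // leeD2r // -EFinD lee_fin addrA.
exact: f_add_Ublk_le.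
Qed.

Lemma H_sum_Ublk x (t : forall i, 'cV[R]_(Ni i)) :
  H U B f L Psi x (\sum_i Ublk U i *m t i)
    = ((f x)%:E + \sum_i V U B f L Psi i x (t i))%E.
Proof.
rewrite /H /V big_split /= sumEFin addeA -EFinD; congr (_%:E + _).
  rewrite -addrA vdot_sumr /Lnorm2 mulr_sumr -big_split /=; congr (_ + _).
  by apply: eq_bigr => i _; rewrite vdot_mulmxr xblk_sum_Ublk //; lra.
apply: eq_bigr => i _.
by rewrite /xblk mulmxDr -/(xblk U (\sum_j Ublk U j *m t j) i) xblk_sum_Ublk.
Qed.

End BlockModel.

Section UniformLastCoordinate.
Variables (R : realType) (I : finType) (k : nat).

Lemma rcons_tuple_bij : bijective (fun pi : k.-tuple I * I => rcons_tuple pi.1 pi.2).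
Proof.
pose split (w : k.+1.-tuple I) :=
  ([tuple of belast (thead w) (behead w)], last (thead w) (behead w)).
exists split => [[p i]|w]; last first.
  by apply: val_inj; rewrite /= -lastI [in RHS](tuple_eta w).
have /= := congr1 val (tuple_eta (rcons_tuple p i)); rewrite lastI.
case/rcons_inj => ep ei; rewrite /split [in RHS]ei; congr pair.
exact/val_inj/esym.
Qed.

Lemma condE_uniform_last (T : eqType) (X : k.+1.-tuple I -> T)
    (Y : k.+1.-tuple I -> \bar R) (X' : k.-tuple I -> T) (Z : T -> I -> \bar R) :
  (forall p i, X (rcons_tuple p i) = X' p) ->
  (forall p i, Y (rcons_tuple p i) = Z (X' p) i) ->
  forall w, condE Y X w = ((#|I|%:R^-1)%:E * \sum_(i : I) Z (X w) i)%E.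
Proof.
move=> XE YE w; rewrite /condE.
set c := X w; set S := (\sum_(i : I) Z c i)%E.
set m := #|[pred p : k.-tuple I | X' p == c]|.
have reindex_pairs (V : nmodType) (G : k.+1.-tuple I -> V) :
    \sum_(w' | X w' == c) G w' = \sum_(p | X' p == c) \sum_i G (rcons_tuple p i).
  rewrite (reindex _ (onW_bij _ rcons_tuple_bij)) /= pair_big_dep.
  by apply: eq_bigl => -[p i]; rewrite /= XE andbT.
have sumE : (\sum_(w' | X w' == c) Y w' = S *+ m)%E.
  rewrite reindex_pairs (eq_bigr (fun=> S)) ?sumr_const // => p /eqP Xp.
  by rewrite /S -Xp; apply: eq_bigr => i _; rewrite YE.
have cardE : #|[pred w' | X w' == c]| = (m * #|I|)%N.
  rewrite -sum1_card reindex_pairs (eq_bigr (fun=> #|I|)) ?sum_nat_const //.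
  by move=> p _; rewrite muln1.
have m_gt0 : (0 < m)%N.
  have [g _ gK] := rcons_tuple_bij; apply/card_gt0P; exists (g w).1.
  by rewrite inE -(XE _ (g w).2) gK.
rewrite sumE cardE -mule_natr -muleA -EFinM muleC natrM invfM mulrA.
by rewrite mulfV ?mul1r // pnatr_eq0 -lt0n.
Qed.
End UniformLastCoordinate.

Lemma sum_add_sum_neq (V : nmodType) n (a : V) (v p : 'I_n -> V) : (0 < n)%N ->
  \sum_i (a + v i + \sum_(j | j != i) p j)
    = (a + \sum_i v i) + (a + \sum_i p i) *+ n.-1.
Proof.
case: n a v p => // n' a v p _.
rewrite !big_split /= sumr_const card_ord (exchange_big_dep xpredT) //=.
rewrite [X in _ + X](eq_bigr (fun j => p j *+ n')) => [|j _]; last first.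
  rewrite (eq_bigl (fun i => i \in predC1 j)) => [|i]; last by rewrite !inE eq_sym.
  by rewrite sumr_const cardC1 card_ord.
by rewrite sumrMnl mulrnDl mulrS -!addrA; congr (_ + _); rewrite addrCA.
Qed.

Section ExtendedReals.
Variable R : realType.
Local Open Scope ereal_scope.
Implicit Types x y : \bar R.

Lemma adde_gtNy x y : -oo < x -> -oo < y -> -oo < x + y.
Proof. by move: x y => [x| |] [y| |] //= _ _; rewrite -EFinD ltNyr. Qed.

Lemma sume_gtNy (I : Type) (r : seq I) (P : pred I) (F : I -> \bar R) :
  (forall i, P i -> -oo < F i) -> -oo < \sum_(i <- r | P i) F i.
Proof. by move=> FP; elim/big_ind: _ => //; exact: adde_gtNy. Qed.

Lemma mule_average x y n : (0 < n)%N -> -oo < x -> -oo < y ->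
  (n%:R^-1)%:E * (x + (y *+ n.-1)%R)
    = (n%:R^-1)%:E * x + ((n%:R - 1) / n%:R)%:E * y.
Proof.
move=> n_gt0 x_gtNy y_gtNy.
have yn_gtNy : -oo < y *+ n.-1.
  by elim: n.-1 => [|m ym]; [exact: ltNy0 | rewrite muleS adde_gtNy].
rewrite muleDr ?ltninfty_adde_def //; congr (_ + _).
by rewrite -[(y *+ _)%R]/(y *+ n.-1) -mule_natl muleA -EFinM mulrC -subn1 natrB.
Qed.

End ExtendedReals.

Section OneStepBound.
Variables (R : realType) (n : nat) (Ni : 'I_n -> nat).
Local Notation N := (\sum_(i < n) Ni i)%N.
Variables (U : 'M[R]_N) (B : forall i, 'M[R]_(Ni i)) (f : 'cV[R]_N -> R)
  (L : 'I_n -> R) (Psi : forall i, 'cV[R]_(Ni i) -> \bar R).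
Arguments Psi : clear implicits.
Hypothesis UtU : U^T *m U = 1%:M.
Hypothesis Bpd : forall i, posdef (B i).
Hypothesis fdiff : forall x, differentiable f x.
Hypothesis fLip : forall x i (t : 'cV[R]_(Ni i)),
  bdnorm (B i) (gradblk U f (x + Ublk U i *m t) i - gradblk U f x i)
    <= L i * bnorm (B i) t.
Hypothesis Psi_proper : forall i, proper_efun (Psi i).
Hypothesis F_min : exists xs, forall x, (F U f Psi xs <= F U f Psi x)%E.

Lemma x_at_rcons x0 k (p : k.-tuple 'I_n) i :
  x_at U B f L Psi x0 k k (rcons_tuple p i) = iterate U B f L Psi x0 p.
Proof. by rewrite /x_at /= -cats1 take_size_cat ?size_tuple. Qed.

Lemma x_at_rcons_succ x0 k (p : k.-tuple 'I_n) i :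
  x_at U B f L Psi x0 k k.+1 (rcons_tuple p i)
    = step U B f L Psi (iterate U B f L Psi x0 p) i.
Proof.
by rewrite /x_at /= take_oversize ?size_rcons ?size_tuple // /iterate foldl_rcons.
Qed.

Lemma Psi_gtNy i t : (-oo < Psi i t)%E.
Proof. by rewrite ltNye; case: (Psi_proper i). Qed.

Lemma F_gtNy x : (-oo < F U f Psi x)%E.
Proof. by rewrite adde_gtNy ?ltNyr ?sume_gtNy // => i _; exact: Psi_gtNy. Qed.

Lemma Fstar_fin_num : Fstar U f Psi \is a fin_num.
Proof.
have [xs xs_min] := F_min.
have -> : Fstar U f Psi = F U f Psi xs.
  apply/eqP; rewrite eq_le ereal_inf_lbound /=; last by exists xs.
  by apply/ereal_infP => _ [y _ <-]; exact: xs_min.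
pose t i := xget 0 [set ti | Psi i ti != +oo%E].
have Psit i : Psi i (t i) != +oo%E.
  by case: (Psi_proper i) => _; exact: xgetPex.
have Fz_lty : (F U f Psi (\sum_i Ublk U i *m t i) < +oo)%E.
  rewrite /F /Psi_full lte_add_pinfty ?ltry // lte_sum_pinfty // => i _.
  by rewrite xblk_sum_Ublk // ltey.
by rewrite fin_numE -ltNye F_gtNy -ltey (le_lt_trans (xs_min _) Fz_lty).
Qed.

Lemma mean_F_step_le x r : (0 < n)%N ->
  ((n%:R^-1)%:E * \sum_(i < n) (F U f Psi (step U B f L Psi x i) - r%:E)
    <= (n%:R^-1)%:E * (H U B f L Psi x (Tfull U B f L Psi x) - r%:E)
       + ((n%:R - 1) / n%:R)%:E * (F U f Psi x - r%:E))%E.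
Proof.
move=> n_gt0; set a := ((f x)%:E - r%:E)%E.
set v := fun i => V U B f L Psi i x (Tblk U B f L Psi x i).
set P := fun j => Psi j (xblk U x j).
have step_le : (\sum_(i < n) (F U f Psi (step U B f L Psi x i) - r%:E)
                 <= \sum_(i < n) (a + v i + \sum_(j | j != i) P j))%E.
  apply: lee_sum => i _.
  have F_le := F_add_Ublk_le Psi UtU Bpd fdiff fLip x (Tblk U B f L Psi x i).
  apply: le_trans (leeB F_le (lexx r%:E)) _.
  by rewrite /a (addeAC _ _ (- r%:E)%E) (addeAC (f x)%:E).
apply: le_trans (lee_wpmul2l _ step_le) _; first by rewrite lee_fin invr_ge0.
have HE : (H U B f L Psi x (Tfull U B f L Psi x) - r%:E = a + \sum_(i < n) v i)%E.
  by rewrite /Tfull H_sum_Ublk // /a addeAC.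
have FE : (F U f Psi x - r%:E = a + \sum_(j < n) P j)%E by rewrite /F /a addeAC.
rewrite sum_add_sum_neq // mule_average // ?HE ?FE //.
  by rewrite adde_gtNy ?ltNyr ?sume_gtNy // => i _; rewrite adde_gtNy ?ltNyr ?Psi_gtNy.
by rewrite adde_gtNy ?ltNyr ?sume_gtNy // => j _; exact: Psi_gtNy.
Qed.

End OneStepBound.

Theorem lemma2 (R : realType) (n : nat) (Ni : 'I_n -> nat)
  (U : 'M[R]_(\sum_(i < n) Ni i)) (hU : is_perm_mx U)
  (B : forall i : 'I_n, 'M[R]_(Ni i)) (hB : forall i, posdef (B i))
  (f : 'cV[R]_(\sum_(i < n) Ni i) -> R) (hfconv : convex_fun f)
  (hfdiff : forall x, differentiable f x)
  (L : 'I_n -> R) (hL : forall i, 0 < L i)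
  (hLip : forall (x : 'cV[R]_(\sum_(i < n) Ni i)) (i : 'I_n) (t : 'cV[R]_(Ni i)),
     bdnorm (B i) (gradblk U f (x + Ublk U i *m t) i - gradblk U f x i)
       <= L i * bnorm (B i) t)
  (Psi : forall i : 'I_n, 'cV[R]_(Ni i) -> \bar R)
  (hPsi : forall i, [/\ proper_efun (Psi i), closed_efun (Psi i)
                      & convex_efun (Psi i)])
  (hmin : exists xs, forall x, (F U f Psi xs <= F U f Psi x)%E)
  (x0 : 'cV[R]_(\sum_(i < n) Ni i)) (k : nat) (w : k.+1.-tuple 'I_n) :
  let xk := x_at U B f L Psi x0 k k in
  let xk1 := x_at U B f L Psi x0 k k.+1 in
  (condE (fun w' => F U f Psi (xk1 w') - Fstar U f Psi) xk w
   <= (n%:R^-1)%:E * (H U B f L Psi (xk w) (Tfull U B f L Psi (xk w))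
                       - Fstar U f Psi)
      + ((n%:R - 1) / n%:R)%:E * (F U f Psi (xk w) - Fstar U f Psi))%E.
Proof.
cbv zeta.
have UtU := perm_mx_trmx_mul hU.
have Psi_proper i : proper_efun (Psi i) by case: (hPsi i).
have n_gt0 : (0 < n)%N by case: (thead w) => j /(leq_ltn_trans (leq0n j)).
rewrite -(fineK (Fstar_fin_num UtU Psi_proper hmin)).
rewrite (condE_uniform_last (X' := iterate U B f L Psi x0)
  (Z := fun x i => F U f Psi (step U B f L Psi x i) - (fine (Fstar U f Psi))%:E)%E).
- by rewrite card_ord mean_F_step_le.
- by move=> p i; rewrite x_at_rcons.
- by move=> p i; rewrite x_at_rcons_succ.
Qed.
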